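(* Let $S$ be an entropy function for a finite set $X$. Given functions $\mu,\nu:2^X\to[0,\infty)$, there exist subsets $A_1\subset\cdots\subset A_m$ and $B_1\subset\cdots\subset B_n$ of $X$ with $A_m\cap B_n=\emptyset$, and functions $\mu',\nu':2^X\to[0,\infty)$ supported on $\{A_1,\dots,A_m\}$ and $\{B_1,\dots,B_n\}$ respectively, such that $\phi_{\mu'}-\phi_{\nu'}=\phi_\mu-\phi_\nu$ and \[\sum_{A\subseteq X}(\mu'(A)+\nu'(A))S(A)\le\sum_{A\subseteq X}(\mu(A)+\nu(A))S(A).\]
   Context: An entropy function for a finite set $X$ is a function $S:2^X\to[0,\infty)$ with $S(\emptyset)=0$, $S(A)+S(B)\ge S(A\cap B)+S(A\cup B)$ and $S(A)+S(B)\ge S(A\setminus B)+S(B\setminus A)$ for all $A,B\subseteq X$. For $\mu:2^X\to\mathbb R$, $\phi_\mu:X\to\mathbb R$ is defined by $\phi_\mu(x):=\sum_{A\ni x}\mu(A)$. *)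

From HB Require Import structures.
From mathcomp Require Import all_boot all_order all_algebra.
Set Implicit Arguments. Unset Strict Implicit. Unset Printing Implicit Defensive.
Import Order.TTheory GRing.Theory Num.Theory.
Local Open Scope ring_scope.

Definition entropy_function (R : realFieldType) (X : finType)
  (S : {set X} -> R) : Prop :=
  [/\ forall A, 0 <= S A,
      S set0 = 0,
      forall A B, S (A :&: B) + S (A :|: B) <= S A + S B
    & forall A B, S (A :\: B) + S (B :\: A) <= S A + S B].

Definition phi (R : realFieldType) (X : finType) (mu : {set X} -> R) (x : X) : R :=
  \sum_(A : {set X} | x \in A) mu A.

Definition is_chain (X : finType) (s : seq {set X}) : Prop :=
  sorted (fun A B : {set X} => A \proper B) s.

Definition supported_on (R : realFieldType) (X : finType)
  (mu : {set X} -> R) (s : seq {set X}) : Prop :=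
  forall A, mu A != 0 -> A \in s.

From HB Require Import structures.
From mathcomp Require Import all_boot all_order all_algebra.
From mathcomp Require Import ring lra.
Import Order.TTheory GRing.Theory Num.Theory.
Local Open Scope ring_scope.
Set Implicit Arguments. Unset Strict Implicit. Unset Printing Implicit Defensive.

(* Let g := phi_mu - phi_nu.  List P = {g >= 0} by decreasing g and
   N = {g < 0} by decreasing -g; the prefixes of the two lists form chains
   with disjoint tops, and weighting each prefix by the drop of |g| at its
   last element yields mu', nu' with phi_mu' - phi_nu' = g.  By summation by
   parts the new cost is sum_x g(x) Y(x), where Y(x) is the entropy increment
   of x along its own list, negated on N.  Submodularity (the greedy bound)
   and posimodularity give |sum_(x in A) Y(x)| <= S(A) for every A, so this
   cost, which equals sum_A (mu(A) - nu(A)) sum_(x in A) Y(x), is at most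
   sum_A (mu(A) + nu(A)) S(A). *)

Lemma sum_if_eq (I : finType) (V : nmodType) (P : pred I) (j : I) (F : I -> V) :
  \sum_(i | P i) (if i == j then F i else 0) = if P j then F j else 0.
Proof.
rewrite -big_mkcondr; case: ifP => Pj.
  by rewrite (big_pred1 j) // => i /=; have [->|] := eqVneq i j; rewrite ?Pj ?andbF.
by rewrite big_pred0 // => i; apply/andP => -[Pi /eqP eij]; rewrite -eij Pi in Pj.
Qed.

Lemma sum_by_parts (R : comPzRingType) (f g : nat -> R) n :
  \sum_(i < n) (f i - f i.+1) * g i.+1 =
  \sum_(i < n) f i * (g i.+1 - g i) + f 0%N * g 0%N - f n * g n.
Proof. by elim: n => [|n IH]; rewrite ?big_ord0 ?big_ord_recr ?IH /=; ring. Qed.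

Section Marginals.
Variables (R : realFieldType) (X : finType) (S : {set X} -> R).
Implicit Types (s : seq X) (A B T : {set X}).

Definition submodular := forall A B, S (A :&: B) + S (A :|: B) <= S A + S B.

Definition prefix_set s (i : nat) : {set X} := [set x in take i s].

Definition marginal s (x : X) : R :=
  if x \in s then S (prefix_set s (index x s).+1) - S (prefix_set s (index x s))
  else 0.

Lemma mem_prefix_set s i x : (x \in prefix_set s i) = (x \in s) && (index x s < i)%N.
Proof.
rewrite inE; case xs: (x \in s); first exact: in_take.
by apply/negP => /mem_take; rewrite xs.
Qed.

Lemma set_rcons s z : [set x in rcons s z] = z |: [set x in s].
Proof. by apply/setP => x; rewrite !inE mem_rcons in_cons. Qed.

Lemma marginal_rcons s z x : uniq (rcons s z) ->
  marginal (rcons s z) x =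
  marginal s x + (if x == z then S (z |: [set y in s]) - S [set y in s] else 0).
Proof.
rewrite rcons_uniq => /andP [zs _].
rewrite /marginal /prefix_set mem_rcons in_cons -cats1 index_cat.
have [->|_] /= := eqVneq x z.
  rewrite (negbTE zs) eqxx addn0 add0r (take_size_cat _ (erefl (size s))).
  by rewrite take_oversize ?size_cat ?addn1 // cats1 set_rcons.
case xs: (x \in s); last by rewrite addr0.
have ltxs : (index x s < size s)%N by rewrite index_mem xs.
by rewrite !takel_cat ?addr0 // ltnW.
Qed.

Lemma sum_marginal_rcons s z A : uniq (rcons s z) ->
  \sum_(x in A) marginal (rcons s z) x = \sum_(x in A) marginal s x +
   (if z \in A then S (z |: [set y in s]) - S [set y in s] else 0).
Proof.
move=> u; rewrite (eq_bigr _ (fun x _ => marginal_rcons x u)) big_split /=.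
by rewrite sum_if_eq.
Qed.

Lemma sum_marginal s : uniq s -> \sum_x marginal s x = S [set x in s] - S set0.
Proof.
elim/last_ind: s => [|s z IH] u.
  have -> : [set x in [::]] = set0 :> {set X} by apply/setP => x; rewrite !inE.
  by rewrite subrr big1 // => x _; rewrite /marginal in_nil.
have us : uniq s by move: u; rewrite rcons_uniq => /andP [].
have := sum_marginal_rcons setT u.
rewrite !(eq_bigl _ _ (@in_setT X)) in_setT IH // set_rcons => ->.
by rewrite addrC addrA subrK.
Qed.

Lemma submodular_marginal_le : submodular -> forall B T z,
  B \subset T -> z \notin T -> S (z |: T) - S T <= S (z |: B) - S B.
Proof.
move=> hsub B T z BT zT; have zB : z \notin B := contra (subsetP BT z) zT.
have := hsub (z |: B) T.
rewrite (_ : (z |: B) :&: T = B); last first.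
  apply/setP => x; rewrite !inE; have [->|_] //= := eqVneq x z.
    by rewrite (negbTE zT) (negbTE zB).
  by rewrite andb_idr // => /(subsetP BT).
by rewrite -setUA (setUidPr BT); lra.
Qed.

Lemma sum_marginal_le : submodular -> forall s A, uniq s ->
  \sum_(x in A) marginal s x <= S (A :&: [set x in s]) - S set0.
Proof.
move=> hsub; elim/last_ind => [|s z IH] A u.
  have -> : A :&: [set x in [::]] = set0 by apply/setP => x; rewrite !inE andbF.
  by rewrite subrr big1 // => x _; rewrite /marginal in_nil.
have /andP [zs us] : (z \notin s) && uniq s by rewrite -rcons_uniq.
rewrite sum_marginal_rcons // set_rcons setIUr.
have IHs := IH A us.
case: ifP => zA.
  rewrite (setIidPr _) ?sub1set //.
  have zsT : z \notin [set x in s] by rewrite inE.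
  have := submodular_marginal_le hsub (subsetIr A [set x in s]) zsT.
  lra.
have -> : A :&: [set z] = set0.
  by apply/setP => x; rewrite !inE; have [->|] := eqVneq x z; rewrite ?zA ?andbF.
by rewrite set0U addr0.
Qed.

Lemma sum_marginal_sub_le : entropy_function S -> forall sP sN A,
  uniq sP -> uniq sN -> [set x in sP] = ~: [set x in sN] ->
  \sum_(x in A) marginal sP x - \sum_(x in A) marginal sN x <= S A.
Proof.
case=> _ S0 hsub hpos sP sN A uP uN compl.
have leP := sum_marginal_le hsub A uP.
have leN := sum_marginal_le hsub (~: A) uN.
have sumN := sum_marginal uN; rewrite (bigID (mem A)) /= in sumN.
rewrite (eq_bigl (fun x => x \notin A) _ (fun x => in_setC x A)) in leN.
have := hpos A [set x in sN].
rewrite !setDE -compl (setIC [set x in sN]) S0 in leN sumN *.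
lra.
Qed.

End Marginals.

Section ChainMeasure.
Variables (R : realFieldType) (X : finType).
Implicit Types (a : X -> R) (s : seq X) (A : {set X}).

Definition chain_sets s : seq {set X} := map (prefix_set s) (iota 1 (size s)).

(* The i-th prefix gets weight a(s_i) - a(s_(i+1)); since [(map a s)`_(size s)]
   is 0, the full set gets the value of a at the last element of s. *)
Definition chain_measure a s A : R :=
  \sum_(i < size s)
     (if A == prefix_set s i.+1 then (map a s)`_i - (map a s)`_i.+1 else 0).

Lemma prefix_set_proper s i j : uniq s -> (i < j <= size s)%N ->
  prefix_set s i \proper prefix_set s j.
Proof.
case: s => [|x0 s] us /andP [lt_ij le_js]; first by case: j lt_ij le_js.
have lt_is := leq_trans lt_ij le_js.
apply/properP; split.
  apply/subsetP => x; rewrite !mem_prefix_set => /andP [-> lt_xi].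
  exact: ltn_trans lt_xi lt_ij.
by exists (nth x0 (x0 :: s) i); rewrite !mem_prefix_set mem_nth // index_uniq // ltnn.
Qed.

Lemma is_chain_chain_sets s : uniq s -> is_chain (chain_sets s).
Proof.
move=> us; apply: (homo_sorted_in (P := [pred i | (i <= size s)%N]) (e := ltn)).
- by move=> i j _ le_js lt_ij; apply: prefix_set_proper => //; apply/andP.
- by apply/allP => i; rewrite mem_iota add1n ltnS => /andP [].
- exact: iota_ltn_sorted.
Qed.

Lemma last_chain_sets_sub s : last set0 (chain_sets s) \subset [set x in s].
Proof.
have := mem_last set0 (chain_sets s).
rewrite in_cons => /predU1P [->|]; first exact: sub0set.
by case/mapP => i _ ->; apply/subsetP => x; rewrite mem_prefix_set inE => /andP [].
Qed.

Lemma chain_measure_supported a s : supported_on (chain_measure a s) (chain_sets s).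
Proof.
move=> A; apply: contraR => notA; rewrite /chain_measure big1 // => i _.
case: eqP => // eA; case/negP: notA; rewrite eA.
by apply/mapP; exists i.+1; rewrite // mem_iota add1n /= ltnS ltn_ord.
Qed.

Lemma chain_measure_ge0 a s : sorted (fun x y => a y <= a x) s ->
  {in s, forall x, 0 <= a x} -> forall A, 0 <= chain_measure a s A.
Proof.
move=> srt a_ge0 A; apply: sumr_ge0 => i _; case: ifP => // _.
have srt' : sorted (fun u v => v <= u) (map a s) by rewrite sorted_map.
rewrite subr_ge0; have [lt_is|] := ltnP i.+1 (size (map a s)).
  exact: (sortedP 0 srt') i lt_is.
move=> le_si; rewrite [X in X <= _]nth_default //.
have /mapP [x xs ->] : (map a s)`_i \in map a s by rewrite mem_nth ?size_map.
exact: a_ge0.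
Qed.

Lemma phi_chain_measure a s x :
  phi (chain_measure a s) x = if x \in s then a x else 0.
Proof.
rewrite /phi /chain_measure exchange_big /=.
under eq_bigr => i _ do rewrite sum_if_eq mem_prefix_set ltnS.
case xs: (x \in s); last by rewrite big1.
have lt_xs : (index x s < size s)%N by rewrite index_mem.
set w := fun i => (map a s)`_i - (map a s)`_i.+1.
have -> : \sum_(i < size s) (if true && (index x s <= i)%N then w i else 0) =
          \sum_(index x s <= i < size s) w i by rewrite big_geq_mkord [RHS]big_mkcond.
rewrite (telescope_sumr_eq (fun i => - (map a s)`_i) w (ltnW lt_xs)); last first.
  by move=> i _; rewrite /w opprK addrC.
by rewrite nth_default ?size_map // oppr0 sub0r opprK (nth_map x) // nth_index.
Qed.

Lemma chain_measure_cost (S : {set X} -> R) a s : S set0 = 0 -> uniq s ->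
  \sum_A chain_measure a s A * S A = \sum_x a x * marginal S s x.
Proof.
move=> S0 us; set w := fun i => (map a s)`_i - (map a s)`_i.+1.
have -> : \sum_A chain_measure a s A * S A =
          \sum_(i < size s) w i * S (prefix_set s i.+1).
  rewrite /chain_measure; under eq_bigr do rewrite mulr_suml; rewrite exchange_big /=.
  apply: eq_bigr => i _; under eq_bigr do rewrite (fun_if (fun y => y * S _)) mul0r.
  by rewrite sum_if_eq.
rewrite (sum_by_parts (fun i => (map a s)`_i) (fun i => S (prefix_set s i))).
have -> : prefix_set s 0 = set0 by apply/setP => x; rewrite mem_prefix_set inE andbF.
rewrite [(map a s)`_(size s)]nth_default ?size_map // S0 mul0r mulr0 subr0 addr0.
rewrite [RHS](bigID (mem s)) /= [X in _ + X]big1 ?addr0 => [|x /negbTE xs]; last first.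
  by rewrite /marginal xs mulr0.
case: s us {w} => [|x0 s] us; first by rewrite big_ord0 big_pred0.
rewrite -big_uniq // (big_nth x0) big_mkord; apply: eq_bigr => i _.
by rewrite (nth_map x0) // /marginal mem_nth // index_uniq.
Qed.

End ChainMeasure.

Section Realization.
Variables (R : realFieldType) (X : finType).
Implicit Types (a : X -> R) (P : pred X) (m : {set X} -> R).

Lemma sum_phi_mul m (Y : X -> R) :
  \sum_x phi m x * Y x = \sum_A m A * \sum_(x in A) Y x.
Proof.
under eq_bigr do rewrite /phi mulr_suml big_mkcond.
rewrite exchange_big /=; apply: eq_bigr => A _.
rewrite mulr_sumr [RHS]big_mkcond; apply: eq_bigr => x _.
by case: ifP; rewrite ?mulr0.
Qed.

Definition sort_desc a P : seq X := sort (fun x y => a y <= a x) [seq x <- enum X | P x].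

Lemma sort_desc_uniq a P : uniq (sort_desc a P).
Proof. by rewrite sort_uniq filter_uniq ?enum_uniq. Qed.

Lemma mem_sort_desc a P x : (x \in sort_desc a P) = P x.
Proof. by rewrite mem_sort mem_filter mem_enum andbT. Qed.

Lemma sort_desc_sorted a P : sorted (fun x y => a y <= a x) (sort_desc a P).
Proof. by apply: sort_sorted => x y; apply: le_total. Qed.

Lemma sum_marginal_cost_le (S : {set X} -> R) m m' sP sN :
  entropy_function S -> (forall A, 0 <= m A) -> (forall A, 0 <= m' A) ->
  uniq sP -> uniq sN -> [set x in sP] = ~: [set x in sN] ->
  \sum_x (phi m x - phi m' x) * (marginal S sP x - marginal S sN x)
    <= \sum_A (m A + m' A) * S A.
Proof.
move=> hS m_ge0 m'_ge0 uP uN compl.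
have compl' : [set x in sN] = ~: [set x in sP] by rewrite compl setCK.
under eq_bigr do rewrite mulrBl.
rewrite sumrB !sum_phi_mul -sumrB; apply: ler_sum => A _.
rewrite mulrDl -mulrN sumrB; apply: lerD; apply: ler_wpM2l => //.
  exact: sum_marginal_sub_le.
by rewrite opprB; apply: sum_marginal_sub_le.
Qed.

End Realization.

Theorem corollary32 (R : realFieldType) (X : finType) (S : {set X} -> R)
  (hS : entropy_function S) (mu nu : {set X} -> R)
  (hmu : forall A, 0 <= mu A) (hnu : forall A, 0 <= nu A) :
  exists (sA sB : seq {set X}) (mu' nu' : {set X} -> R),
    (is_chain sA /\ is_chain sB) /\ [/\ last set0 sA :&: last set0 sB = set0,
        (forall A, 0 <= mu' A) /\ (forall A, 0 <= nu' A),
        supported_on mu' sA /\ supported_on nu' sB,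
        (forall x, phi mu' x - phi nu' x = phi mu x - phi nu x)
      & \sum_(A : {set X}) (mu' A + nu' A) * S A
          <= \sum_(A : {set X}) (mu A + nu A) * S A].
Proof.
have S0 : S set0 = 0 by case: hS.
pose g x := phi mu x - phi nu x.
pose sP := sort_desc g (fun x => 0 <= g x).
pose sN := sort_desc (fun x => - g x) (fun x => g x < 0).
have compl : [set x in sP] = ~: [set x in sN].
  by apply/setP => x; rewrite !inE !mem_sort_desc ltNge negbK.
exists (chain_sets sP), (chain_sets sN), (chain_measure g sP),
  (chain_measure (fun x => - g x) sN).
split; first by split; apply/is_chain_chain_sets/sort_desc_uniq.
split.
- have := setISS (last_chain_sets_sub sP) (last_chain_sets_sub sN).
  by rewrite compl [~: _ :&: _]setIC setICr subset0 => /eqP.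
- by split; apply: chain_measure_ge0 (sort_desc_sorted _ _) _ => x;
    rewrite mem_sort_desc // oppr_ge0 => /ltW.
- by split; apply: chain_measure_supported.
- move=> x; rewrite !phi_chain_measure !mem_sort_desc ltNge.
  by case: (0 <= g x); rewrite ?subr0 ?sub0r ?opprK.
under eq_bigr do rewrite mulrDl.
rewrite big_split /= !chain_measure_cost ?sort_desc_uniq //.
apply: le_trans (sum_marginal_cost_le hS hmu hnu _ _ compl); rewrite ?sort_desc_uniq //.
by rewrite -big_split; apply: ler_sum => x _; rewrite mulNr mulrBr.
Qed.
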